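(* The formula $\mathsf F(p\Rightarrow\mathsf X p)$ (for $p\in\mathbb P$) is falsifiable on some bi-relational model, but in every bi-relational model $(W,T,\le,S,[\![\cdot]\!])$ in which it is falsified (i.e. $[\![\mathsf F(p\Rightarrow\mathsf Xp)]\!]\neq W\times T$), both $W$ and $T$ are infinite. Consequently none of the following properties holds: (strong FMP) every formula falsifiable on a bi-relational model is falsifiable on one with $W$ and $T$ finite; (order FMP) ... on one with $W$ finite; (temporal FMP) ... on one with $T$ finite.
   Context: Fix a countably infinite set $\mathbb P$ of propositional variables. The language $\mathcal L$ is given by $\varphi,\psi ::= p \mid \varphi\wedge\psi \mid \varphi\vee\psi \mid \varphi\Rightarrow\psi \mid \varphi\Leftarrow\psi \mid \mathsf X\varphi \mid \mathsf Y\varphi \mid \mathsf G\varphi \mid \mathsf H\varphi \mid \varphi\,\mathsf U\,\psi \mid \varphi\,\mathsf S\,\psi$; $\top:=p_0\Rightarrow p_0$ for fixed $p_0$, and $\mathsf F\varphi:=\top\,\mathsf U\,\varphi$. A bi-relational frame is $(W,T,\le,S)$ with $(W,\le)$ a linear order and $S\colon T\to T$ a bijection. A bi-relational model adds a valuation $[\![\cdot]\!]\colon\mathcal L\to 2^{W\times T}$ with each $[\![p]\!]$ downward closed in the first coordinate and: $[\![\varphi\wedge\psi]\!]=[\![\varphi]\!]\cap[\![\psi]\!]$; $[\![\varphi\vee\psi]\!]=[\![\varphi]\!]\cup[\![\psi]\!]$; $(w,t)\in[\![\varphi\Rightarrow\psi]\!]$ iff for all $v\le w$, $(v,t)\in[\![\varphi]\!]$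 implies $(v,t)\in[\![\psi]\!]$; $(w,t)\in[\![\varphi\Leftarrow\psi]\!]$ iff some $v\ge w$ has $(v,t)\in[\![\varphi]\!]\setminus[\![\psi]\!]$; $(w,t)\in[\![\mathsf X\varphi]\!]$ iff $(w,S(t))\in[\![\varphi]\!]$; $(w,t)\in[\![\mathsf Y\varphi]\!]$ iff $(w,S^{-1}(t))\in[\![\varphi]\!]$; $(w,t)\in[\![\mathsf G\varphi]\!]$ iff $(w,S^n(t))\in[\![\varphi]\!]$ for all $n\ge0$; $\mathsf H$ dually with $S^{-n}$; $(w,t)\in[\![\varphi\,\mathsf U\,\psi]\!]$ iff there is $n\ge0$ with $(w,S^i(t))\in[\![\varphi]\!]$ for $i<n$ and $(w,S^n(t))\in[\![\psi]\!]$; $\mathsf S$ dually with $S^{-i}$. A formula is falsifiable on a model if $[\![\varphi]\!]\ne W\times T$. *)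

From Stdlib Require Import List.

Inductive form : Type :=
| Var : nat -> form
| And : form -> form -> form
| Or : form -> form -> form
| Imp : form -> form -> form
| Coimp : form -> form -> form
| Next : form -> form
| Prev : form -> form
| Glob : form -> form
| Hist : form -> form
| Until : form -> form -> form
| Since : form -> form -> form.

Definition Top : form := Imp (Var 0) (Var 0).
Definition Fut (phi : form) : form := Until Top phi.

Record biframe := {
  W : Type;
  T : Type;
  le : W -> W -> Prop;
  le_refl : forall w, le w w;
  le_trans : forall u v w, le u v -> le v w -> le u w;
  le_antisym : forall u v, le u v -> le v u -> u = v;
  le_total : forall u v, le u v \/ le v u;
  S : T -> T;
  Sinv : T -> T;
  S_Sinv : forall t, S (Sinv t) = t;
  Sinv_S : forall t, Sinv (S t) = t
}.

Definition Sn (F : biframe) (n : nat) (t : T F) : T F := Nat.iter n (S F) t.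
Definition Sinvn (F : biframe) (n : nat) (t : T F) : T F := Nat.iter n (Sinv F) t.

(* A bi-relational model: a frame with a valuation on all formulas satisfying
   the semantic clauses ([[phi]] viewed as a predicate on W x T). *)
Record bimodel := {
  frame :> biframe;
  val : form -> W frame -> T frame -> Prop;
  val_var_down : forall p w v t, le frame v w -> val (Var p) w t -> val (Var p) v t;
  val_and : forall a b w t, val (And a b) w t <-> (val a w t /\ val b w t);
  val_or : forall a b w t, val (Or a b) w t <-> (val a w t \/ val b w t);
  val_imp : forall a b w t, val (Imp a b) w t <->
      (forall v, le frame v w -> val a v t -> val b v t);
  val_coimp : forall a b w t, val (Coimp a b) w t <->
      (exists v, le frame w v /\ val a v t /\ ~ val b v t);
  val_next : forall a w t, val (Next a) w t <-> val a w (S frame t);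
  val_prev : forall a w t, val (Prev a) w t <-> val a w (Sinv frame t);
  val_glob : forall a w t, val (Glob a) w t <-> (forall n, val a w (Sn frame n t));
  val_hist : forall a w t, val (Hist a) w t <-> (forall n, val a w (Sinvn frame n t));
  val_until : forall a b w t, val (Until a b) w t <->
      (exists n, (forall i, i < n -> val a w (Sn frame i t)) /\ val b w (Sn frame n t));
  val_since : forall a b w t, val (Since a b) w t <->
      (exists n, (forall i, i < n -> val a w (Sinvn frame i t)) /\ val b w (Sinvn frame n t))
}.

Definition falsifiable_on (M : bimodel) (phi : form) : Prop :=
  exists (w : W M) (t : T M), ~ val M phi w t.

Definition finite_type (X : Type) : Prop := exists l : list X, forall x, In x l.

Definition strong_FMP : Prop := forall phi,
  (exists M, falsifiable_on M phi) ->
  exists M, falsifiable_on M phi /\ finite_type (W M) /\ finite_type (T M).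
Definition order_FMP : Prop := forall phi,
  (exists M, falsifiable_on M phi) ->
  exists M, falsifiable_on M phi /\ finite_type (W M).
Definition temporal_FMP : Prop := forall phi,
  (exists M, falsifiable_on M phi) ->
  exists M, falsifiable_on M phi /\ finite_type (T M).

(** If [F (p => X p)] fails at [(w, t)], then for every [n] the implication
    [p => X p] fails at [(w, S^n t)], so some [v_n <= w] satisfies [p] at
    time [S^n t] but not at [S^(n+1) t].  Downward closure of [p] forbids
    [v_n <= v_(n+1)], hence by linearity [v_0 > v_1 > v_2 > ...]: the worlds
    [v_n] are pairwise distinct.  The times [S^n t] are pairwise distinct
    too: if [S^a t = S^b t] with [a < b], then [p] holds at [(v_a, S^a t)],
    so by downward closure at [(v_(b-1), S^b t)], contradicting the choice
    of [v_(b-1)].  Conversely the formula fails on the model with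
    [W = (nat, >=)], [T = (Z, +1)] and [p] true at [(w, t)] iff [t <= w]. *)

From Stdlib Require Import List Arith Lia ZArith Classical ClassicalEpsilon.

Lemma distinct_seq_not_finite (X : Type) (f : nat -> X) :
  (forall a b, a < b -> f a <> f b) -> ~ finite_type X.
Proof.
  intros Hdistinct [l Hl].
  assert (Hinj : forall a b, f a = f b -> a = b).
  { intros a b E; destruct (lt_eq_lt_dec a b) as [[Hab | Hab] | Hab]; auto;
      exfalso; [apply (Hdistinct a b) | apply (Hdistinct b a)]; auto. }
  assert (Hlen := NoDup_incl_length (l := map f (seq 0 (Datatypes.S (length l)))) (l' := l)).
  rewrite length_map, length_seq in Hlen.
  enough (Datatypes.S (length l) <= length l) by lia.
  apply Hlen.
  - apply NoDup_map_NoDup_ForallPairs; [intros x y _ _; apply Hinj | apply seq_NoDup].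
  - intros x _; apply Hl.
Qed.

Lemma no_FMP_of_infinite_countermodels (phi : form) :
  (exists M, falsifiable_on M phi) ->
  (forall M, falsifiable_on M phi -> ~ finite_type (W M) /\ ~ finite_type (T M)) ->
  ~ strong_FMP /\ ~ order_FMP /\ ~ temporal_FMP.
Proof.
  intros Hfals Hinf.
  repeat split; intro Hfmp; destruct (Hfmp phi Hfals) as [M HM];
    destruct (Hinf M) as [HW HT]; tauto.
Qed.

Section DescendingWitnesses.

Variables (M : bimodel) (p : nat) (t0 : T M) (v : nat -> W M).
Hypothesis p_at : forall n, val M (Var p) (v n) (Sn M n t0).
Hypothesis not_p_at_succ : forall n, ~ val M (Var p) (v n) (Sn M (Datatypes.S n) t0).

Lemma witness_not_le_succ n : ~ le M (v n) (v (Datatypes.S n)).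
Proof.
  intro Hle; apply (not_p_at_succ n).
  apply (val_var_down M p (v (Datatypes.S n))); auto.
Qed.

Lemma witness_le_succ n : le M (v (Datatypes.S n)) (v n).
Proof.
  destruct (le_total M (v (Datatypes.S n)) (v n)) as [Hle | Hle]; auto.
  exfalso; exact (witness_not_le_succ n Hle).
Qed.

Lemma witness_le a b : a <= b -> le M (v b) (v a).
Proof.
  induction 1 as [| b _ IH]; [apply le_refl |].
  exact (le_trans M _ _ _ (witness_le_succ b) IH).
Qed.

Lemma witnesses_distinct a b : a < b -> v a <> v b.
Proof.
  intros Hab E; apply (witness_not_le_succ a).
  rewrite E; apply witness_le; exact Hab.
Qed.

Lemma witness_times_distinct a b : a < b -> Sn M a t0 <> Sn M b t0.
Proof.
  intros Hab E.
  destruct b as [| j]; [lia |].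
  apply (not_p_at_succ j); rewrite <- E.
  apply (val_var_down M p (v a)); [apply witness_le; lia | apply p_at].
Qed.

End DescendingWitnesses.

Lemma F_imp_next_false_witnesses (M : bimodel) (p : nat) w t0 :
  ~ val M (Fut (Imp (Var p) (Next (Var p)))) w t0 ->
  forall n, exists v, le M v w /\ val M (Var p) v (Sn M n t0) /\
                      ~ val M (Var p) v (Sn M (Datatypes.S n) t0).
Proof.
  intros Hfalse n; apply NNPP; intro Hnone; apply Hfalse.
  unfold Fut; rewrite val_until; exists n; split.
  - intros i _; unfold Top; rewrite val_imp; auto.
  - rewrite val_imp; intros v Hv Hp; rewrite val_next.
    apply NNPP; intro Hnp; apply Hnone; exists v; auto.
Qed.

Lemma F_imp_next_falsified_infinite (p : nat) (M : bimodel) :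
  falsifiable_on M (Fut (Imp (Var p) (Next (Var p)))) ->
  ~ finite_type (W M) /\ ~ finite_type (T M).
Proof.
  intros [w [t0 Hfalse]].
  destruct (choice _ (F_imp_next_false_witnesses M p w t0 Hfalse)) as [v Hv].
  assert (Hp : forall n, val M (Var p) (v n) (Sn M n t0)) by apply Hv.
  assert (Hnp : forall n, ~ val M (Var p) (v n) (Sn M (Datatypes.S n) t0)) by apply Hv.
  split.
  - exact (distinct_seq_not_finite _ v (witnesses_distinct M p t0 v Hp Hnp)).
  - exact (distinct_seq_not_finite _ (fun n => Sn M n t0)
             (witness_times_distinct M p t0 v Hp Hnp)).
Qed.

Definition ge_nat_Z_frame : biframe.
Proof.
  refine {| W := nat; T := Z; le := fun u v => v <= u; S := Z.succ; Sinv := Z.pred |};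
    intros; lia.
Defined.

Lemma Sn_ge_nat_Z_frame n t : Sn ge_nat_Z_frame n t = (t + Z.of_nat n)%Z.
Proof.
  induction n as [| n IH]; [simpl; lia |].
  change (Z.succ (Sn ge_nat_Z_frame n t) = (t + Z.of_nat (Datatypes.S n))%Z).
  rewrite IH; lia.
Qed.

Fixpoint staircase_val (f : form) (w : nat) (t : Z) : Prop :=
  match f with
  | Var _ => (t <= Z.of_nat w)%Z
  | And a b => staircase_val a w t /\ staircase_val b w t
  | Or a b => staircase_val a w t \/ staircase_val b w t
  | Imp a b => forall v, w <= v -> staircase_val a v t -> staircase_val b v t
  | Coimp a b => exists v, v <= w /\ staircase_val a v t /\ ~ staircase_val b v t
  | Next a => staircase_val a w (Z.succ t)
  | Prev a => staircase_val a w (Z.pred t)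
  | Glob a => forall n, staircase_val a w (Sn ge_nat_Z_frame n t)
  | Hist a => forall n, staircase_val a w (Sinvn ge_nat_Z_frame n t)
  | Until a b => exists n, (forall i, i < n -> staircase_val a w (Sn ge_nat_Z_frame i t))
                           /\ staircase_val b w (Sn ge_nat_Z_frame n t)
  | Since a b => exists n, (forall i, i < n -> staircase_val a w (Sinvn ge_nat_Z_frame i t))
                           /\ staircase_val b w (Sinvn ge_nat_Z_frame n t)
  end.

Definition staircase_model : bimodel.
Proof.
  refine {| frame := ge_nat_Z_frame; val := staircase_val |};
    try (intros; simpl; tauto).
  simpl; intros; lia.
Defined.

Lemma staircase_falsifies_F_imp_next (p : nat) :
  falsifiable_on staircase_model (Fut (Imp (Var p) (Next (Var p)))).
Proof.
  exists 0, 0%Z; simpl; intros [n [_ Himp]].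
  specialize (Himp n); rewrite Sn_ge_nat_Z_frame in Himp.
  assert (Hn : (Z.succ (0 + Z.of_nat n) <= Z.of_nat n)%Z) by (apply Himp; lia).
  lia.
Qed.

Theorem proposition4p2 :
  (forall p : nat,
     (exists M : bimodel, falsifiable_on M (Fut (Imp (Var p) (Next (Var p))))) /\
     (forall M : bimodel, falsifiable_on M (Fut (Imp (Var p) (Next (Var p)))) ->
        ~ finite_type (W M) /\ ~ finite_type (T M)))
  /\ ~ strong_FMP /\ ~ order_FMP /\ ~ temporal_FMP.
Proof.
  split.
  - intro p; split.
    + exists staircase_model; apply staircase_falsifies_F_imp_next.
    + apply F_imp_next_falsified_infinite.
  - apply (no_FMP_of_infinite_countermodels (Fut (Imp (Var 0) (Next (Var 0))))).
    + exists staircase_model; apply staircase_falsifies_F_imp_next.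
    + apply F_imp_next_falsified_infinite.
Qed.
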